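(* Let $G$, $\mathrm{b}$, $(w_{ij})$ with all $w_{ij}\le 0$, $H^*$, $U(H^* )$ and $(y^*,\lambda^* )$ be as in the context, and assume the LP relaxation (Primal LP') has no fractional solution. Then for any alternating path $P$ (with respect to $H^*$) whose endpoints belong to $U(H^* )$, there exists an edge $\{i,j\}\in P$ with $|w_{ij}+y_i^*+y_j^*|>0$.
   Context: Let $G=(V,E)$ be a finite undirected simple graph, $V=\{1,\dots,n\}$, with real edge weights $w_{ij}\le0$ and positive integers $b_i\le\deg_G(i)$; $N(i)$ is the neighbour set of $i$. A $\mathrm{b}$-matching is a set of edges in which each vertex $i$ has degree at most $b_i$; $H^*$ is a minimum weight $\mathrm{b}$-matching, and $U(H^* )$ is the set of vertices $i$ with $\deg_{H^*}(i)<b_i$. Primal LP': minimize $\sum w_{ij}x_{ij}$ s.t. $\sum_{j\in N(i)}x_{ij}\le b_i$, $0\le x_{ij}\le1$. Dual LP': maximize $-\sum_ib_iy_i-\sum\lambda_{ij}$ s.t. $w_{ij}+\lambda_{ij}\ge-y_i-y_j$, $\lambda_{ij}\ge0$ (and $y_i\ge0$). ''No fractional solution'' means every optimal solution of Primal LP' lies in $\{0,1\}^E$. $(y^*,\lambda^* )$ is an optimal solution of Dual LP'. A walk $P=(i_1,\dots,i_k)$ in $G$ is an alternating path (w.r.t. $H^*$) if (a) either all odd edges $\{i_1,i_2\},\{i_3,i_4\},\dots$ are in $H^*$ and all even edges $\{i_2,i_3\},\{i_4,i_5\},\dots$ are not, or vice versa; and (b) $i_r\neq i_{r+1}$ and $i_r\neq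 i_{r+2}$ for $1\le r\le k-2$ (vertices and edges may be revisited but no edge is repeated immediately). *)

From mathcomp Require Import all_boot all_order all_algebra.
From mathcomp Require Import reals.
Set Implicit Arguments. Unset Strict Implicit. Unset Printing Implicit Defensive.
Import Order.TTheory GRing.Theory Num.Theory.
Local Open Scope ring_scope.

Section Defs.
Variable R : realType.
Variable V : finType.

Definition simple_graph (E : {set {set V}}) : Prop :=
  forall e, e \in E -> #|e| = 2%N.

Definition incident (A : {set {set V}}) (i : V) : {set {set V}} :=
  [set e in A | i \in e].
Definition deg (A : {set {set V}}) (i : V) : nat := #|incident A i|.

Definition is_bmatching (E : {set {set V}}) (b : V -> nat) (H : {set {set V}}) : Prop :=
  H \subset E /\ forall i, (deg H i <= b i)%N.

Definition weight (w : {set V} -> R) (H : {set {set V}}) : R := \sum_(e in H) w e.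

Definition min_weight_bmatching (E : {set {set V}}) (b : V -> nat) (w : {set V} -> R) H : Prop :=
  is_bmatching E b H /\
  forall H', is_bmatching E b H' -> weight w H <= weight w H'.

Definition unsat (b : V -> nat) (H : {set {set V}}) : {set V} :=
  [set i | (deg H i < b i)%N].

Definition primal_feasible (E : {set {set V}}) (b : V -> nat) (x : {set V} -> R) : Prop :=
  (forall e, e \in E -> 0 <= x e <= 1) /\
  forall i, \sum_(e in E | i \in e) x e <= (b i)%:R.
Definition primal_obj (E : {set {set V}}) (w x : {set V} -> R) : R := \sum_(e in E) w e * x e.
Definition primal_optimal (E : {set {set V}}) (b : V -> nat) (w : {set V} -> R) (x : {set V} -> R) : Prop :=
  primal_feasible E b x /\
  forall x', primal_feasible E b x' -> primal_obj E w x <= primal_obj E w x'.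

Definition no_fractional_solution (E : {set {set V}}) (b : V -> nat) (w : {set V} -> R) : Prop :=
  forall x, primal_optimal E b w x -> forall e, e \in E -> x e = 0 \/ x e = 1.

Definition dual_feasible (E : {set {set V}}) (w : {set V} -> R) (y : V -> R) (lam : {set V} -> R) : Prop :=
  (forall i, 0 <= y i) /\
  (forall e, e \in E -> 0 <= lam e) /\
  (forall i j, [set i; j] \in E -> - y i - y j <= w [set i; j] + lam [set i; j]).
Definition dual_obj (E : {set {set V}}) (b : V -> nat) (y : V -> R) (lam : {set V} -> R) : R :=
  - (\sum_i (b i)%:R * y i) - \sum_(e in E) lam e.
Definition dual_optimal (E : {set {set V}}) (b : V -> nat) (w : {set V} -> R) (y : V -> R) (lam : {set V} -> R) : Prop :=
  dual_feasible E w y lam /\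
  forall y' lam', dual_feasible E w y' lam' -> dual_obj E b y' lam' <= dual_obj E b y lam.

(* A walk is given as i0 :: p, i.e. vertices v_0 = i0, v_1, ..., v_(size p). *)
Definition wv (i0 : V) (p : seq V) (r : nat) : V := nth i0 (i0 :: p) r.
Definition wedge (i0 : V) (p : seq V) (r : nat) : {set V} := [set wv i0 p r; wv i0 p r.+1].

Definition alternating_path (E : {set {set V}}) (H : {set {set V}}) (i0 : V) (p : seq V) : Prop :=
  [/\ p != [::],
      forall r, (r < size p)%N -> wedge i0 p r \in E,
      exists c : bool, forall r, (r < size p)%N -> (wedge i0 p r \in H) = (odd r == c)
    & forall r, (r.+2 <= size p)%N ->
        wv i0 p r != wv i0 p r.+1 /\ wv i0 p r != wv i0 p r.+2].

End Defs.

(* LP duality, derived here from Farkas' lemma, turns the optimal dual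
   solution (y, lam) into an optimal primal solution of the same value; by
   integrality that solution is a b-matching, so the indicator of the minimum
   b-matching H is primal optimal and, by complementary slackness, y vanishes
   on U(H).  If every edge of the alternating path P were tight, pushing flow
   1/(|P|+1) alternately out of and into H along P would keep the solution
   feasible (only the unsaturated endpoints change their load) and, after
   telescoping the tight-edge equations, keep its cost: a fractional optimum. *)

From mathcomp Require Import all_boot all_order all_algebra.
From mathcomp Require Import reals ring lra.

Set Implicit Arguments.
Unset Strict Implicit.
Unset Printing Implicit Defensive.
Import Order.TTheory GRing.Theory Num.Theory.
Local Open Scope ring_scope.

Section Farkas.
Variables (R : realFieldType) (D K : finType).

Definition dot (u v : D -> R) : R := \sum_j u j * v j.

Lemma dot_subr_scalel (u v z : D -> R) s :
  dot (fun j => u j - s * v j) z = dot u z - s * dot v z.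
Proof. by rewrite /dot mulr_sumr -sumrB; apply: eq_bigr => j _; ring. Qed.

Lemma dot_subr_scaler (u v z : D -> R) s :
  dot z (fun j => u j - s * v j) = dot z u - s * dot z v.
Proof. by rewrite /dot mulr_sumr -sumrB; apply: eq_bigr => j _; ring. Qed.

Lemma dot_project (u v d d' : D -> R) (al : R) :
  dot (fun j => u j - dot u d / al * v j) d' =
  dot u (fun j => d' j - dot v d' / al * d j).
Proof. rewrite dot_subr_scalel dot_subr_scaler; ring. Qed.

Lemma cons_nonneg_combination k (r : seq K) (a : K -> D -> R) (c : D -> R) T u :
    k \notin r -> 0 <= T -> (forall x, 0 <= u x) ->
    (forall j, c j = T * a k j + \sum_(x <- r) u x * a x j) ->
  exists u' : K -> R,
    (forall x, 0 <= u' x) /\ forall j, c j = \sum_(x <- k :: r) u' x * a x j.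
Proof.
move=> kNr T0 u0 cE; exists (fun x => if x == k then T else u x); split.
  by move=> x; case: eqP.
move=> j; rewrite big_cons eqxx cE; congr (_ + _); apply: eq_big_seq => x xr.
by case: eqP xr kNr => // -> ->.
Qed.

Lemma farkas_seq (r : seq K) (a : K -> D -> R) (c : D -> R) : uniq r ->
  (exists u : K -> R, (forall k, 0 <= u k) /\ forall j, c j = \sum_(k <- r) u k * a k j)
  \/ (exists d, (forall k, k \in r -> 0 <= dot (a k) d) /\ dot c d < 0).
Proof.
elim: r a c => [|k r IH] a c.
  move=> _; case: (boolP [forall j, c j == 0]) => [/forallP c0|].
    by left; exists (fun _ => 0); split=> // j; rewrite big_nil; exact/eqP.
  rewrite negb_forall => /existsP[j cj].
  right; exists (fun j => - c j); split=> //.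
  rewrite /dot (eq_bigr (fun j => - c j ^+ 2)) => [|i _]; last by rewrite mulrN.
  rewrite sumrN oppr_lt0 (bigD1 j) //=; apply: ltr_pwDl; first by rewrite exprn_even_gt0.
  by apply: sumr_ge0 => i _; exact: sqr_ge0.
rewrite cons_uniq => /andP[kNr r_uniq].
case: (IH a c r_uniq) => [[u [u0 cE]]|[d [ad cd]]].
  by left; apply: (cons_nonneg_combination kNr (lexx 0) u0) => j; rewrite mul0r add0r.
have [akd|akd] := lerP 0 (dot (a k) d).
  by right; exists d; split=> // x; rewrite in_cons => /predU1P[->|/ad].
set al := dot (a k) d in akd.
pose a' x j := a x j - dot (a x) d / al * a k j.
pose c' j := c j - dot c d / al * a k j.
case: (IH a' c' r_uniq) => [[u [u0 cE]]|[d' [ad' cd']]].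
  left; pose T := (dot c d - \sum_(x <- r) u x * dot (a x) d) / al.
  apply: (cons_nonneg_combination (T := T) kNr _ u0).
    rewrite /T ler_ndivlMr // mul0r subr_le0; apply: le_trans (ltW cd) _.
    by rewrite big_seq; apply: sumr_ge0 => x xr; rewrite mulr_ge0 ?ad.
  move=> j; have := cE j; rewrite /c' /a' /T.
  have -> : \sum_(x <- r) u x * (a x j - dot (a x) d / al * a k j) =
      \sum_(x <- r) u x * a x j - (\sum_(x <- r) u x * dot (a x) d) / al * a k j.
    by rewrite !mulr_suml -sumrB; apply: eq_bigr => x _; ring.
  rewrite mulrBl mulrBl; lra.
right; exists (fun j => d' j - dot (a k) d' / al * d j); split.
  move=> x; rewrite in_cons => /predU1P[->|xr]; last by rewrite -dot_project ad'.
  by rewrite dot_subr_scaler -/al divfK ?subrr // lt_eqF.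
by rewrite -dot_project.
Qed.

Lemma farkas (P : pred K) (a : K -> D -> R) (c : D -> R) :
  (exists u : K -> R, [/\ forall k, 0 <= u k, forall k, ~~ P k -> u k = 0
                       & forall j, c j = \sum_k u k * a k j])
  \/ (exists d, (forall k, P k -> 0 <= dot (a k) d) /\ dot c d < 0).
Proof.
case: (farkas_seq a c (enum_uniq P)) => [[u [u0 cE]]|[d [ad cd]]].
  left; exists (fun k => if P k then u k else 0); split=> [k|k /negbTE->|j] //.
    by case: ifP.
  rewrite cE big_enum big_mkcond /=; apply: eq_bigr => k _.
  by rewrite unfold_in; case: (P k); rewrite ?mul0r.
by right; exists d; split=> // k Pk; rewrite ad ?mem_enum.
Qed.

Lemma exists_feasible_step (s g : K -> R) : (forall k, 0 <= s k) ->
    (forall k, s k = 0 -> 0 <= g k) ->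
  exists2 t, 0 < t & forall k, 0 <= s k + t * g k.
Proof.
move=> s0 sg.
pose M := \sum_k (if 0 < s k then `|g k| / s k else 0).
have M0 : 0 <= M by apply: sumr_ge0 => k _; case: ifP => // /ltW h; apply: divr_ge0.
have t0 : 0 < (1 + M)^-1 by rewrite invr_gt0; lra.
exists (1 + M)^-1 => // k; have [sk0|skN0] := eqVneq (s k) 0.
  by rewrite sk0 add0r mulr_ge0 ?sg // ltW.
have sk_gt0 : 0 < s k by rewrite lt_neqAle eq_sym skN0 s0.
have gk_le : `|g k| / s k <= M.
  rewrite /M (bigD1 k) //= sk_gt0 lerDl; apply: sumr_ge0 => i _.
  by case: ifP => // /ltW h; apply: divr_ge0.
have : `|g k| * (1 + M)^-1 <= s k.
  by rewrite ler_pdivrMr ?ltr_pwDl //; move: gk_le; rewrite ler_pdivrMr //; nra.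
have := ler_norm (- g k); rewrite normrN; nra.
Qed.

End Farkas.

Lemma sum_eq_natl (R : pzSemiRingType) (T : finType) (f : T -> R) i :
  \sum_x (i == x)%:R * f x = f i.
Proof.
rewrite (bigD1 i) //= eqxx mul1r big1 ?addr0 // => x /negbTE.
by rewrite eq_sym => ->; rewrite mul0r.
Qed.

Lemma sum_mem_natl (R : pzSemiRingType) (T : finType) (f : T -> R) (A : {set T}) :
  \sum_x (x \in A)%:R * f x = \sum_(x in A) f x.
Proof.
rewrite [RHS]big_mkcond; apply: eq_bigr => x _.
by case: (x \in A); rewrite ?mul1r ?mul0r.
Qed.

Section Duality.
Variables (R : realType) (V : finType) (E : {set {set V}}) (b : V -> nat).
Variables (w : {set V} -> R) (y : V -> R) (lam : {set V} -> R).
Hypothesis sgE : simple_graph E.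

Lemma edge_neq i j : [set i; j] \in E -> i != j.
Proof. by move=> /sgE; rewrite cards2; case: (i != j). Qed.

Lemma sum_edge (f : V -> R) i j : [set i; j] \in E ->
  \sum_(v in [set i; j]) f v = f i + f j.
Proof. by move=> /edge_neq ij; rewrite big_setU1 ?big_set1 // in_set1. Qed.

Definition load (x : {set V} -> R) v : R := \sum_(e in E | v \in e) x e.

Definition edge_slack e : R := w e + lam e + \sum_(v in e) y v.

Lemma edge_slack_ge0 e : dual_feasible E w y lam -> e \in E -> 0 <= edge_slack e.
Proof.
move=> [_ [_ yl]] eE; have /eqP/cards2P[i [j [_ ee]]] := sgE eE.
by rewrite ee in eE *; have := yl i j eE; rewrite /edge_slack sum_edge //; lra.
Qed.

Lemma sum_load (x : {set V} -> R) :
  \sum_(e in E) x e * \sum_(v in e) y v = \sum_v y v * load x v.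
Proof.
under eq_bigr do rewrite mulr_sumr.
under [RHS]eq_bigr do rewrite mulr_sumr.
rewrite (exchange_big_dep xpredT) //=; apply: eq_bigr => v _.
rewrite big_mkcondr [RHS]big_mkcond [LHS]big_mkcond /=; apply: eq_bigr => e _.
by case: (e \in E); case: (v \in e); rewrite //= mulrC.
Qed.

Lemma duality_gap (x : {set V} -> R) :
  primal_obj E w x - dual_obj E b y lam =
  \sum_(e in E) x e * edge_slack e + \sum_(e in E) lam e * (1 - x e) +
  \sum_v y v * ((b v)%:R - load x v).
Proof.
under [X in _ = X + _ + _]eq_bigr do rewrite !mulrDr.
under [X in _ = _ + X + _]eq_bigr do rewrite mulrBr mulr1.
under [X in _ = _ + _ + X]eq_bigr do rewrite mulrBr.
rewrite !big_split /= !sumrN sum_load /primal_obj /dual_obj.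
have mulC (I : finType) (P : pred I) (f g : I -> R) :
  \sum_(i | P i) f i * g i = \sum_(i | P i) g i * f i.
  by apply: eq_bigr => i _; rewrite mulrC.
rewrite [\sum_(e in E) w e * x e]mulC [\sum_i (b i)%:R * _]mulC.
rewrite [\sum_(e in E) lam e * x e]mulC; ring.
Qed.

Lemma duality_gap_terms_ge0 x : dual_feasible E w y lam -> primal_feasible E b x ->
  [/\ forall e, e \in E -> 0 <= x e * edge_slack e,
      forall e, e \in E -> 0 <= lam e * (1 - x e) &
      forall v, 0 <= y v * ((b v)%:R - load x v)].
Proof.
move=> yl_feas [x01 x_load]; have [y0 [lam0 _]] := yl_feas; split.
- by move=> e eE; have /andP[x0 _] := x01 e eE; rewrite mulr_ge0 ?edge_slack_ge0.
- by move=> e eE; have /andP[_ x1] := x01 e eE; rewrite mulr_ge0 ?lam0 ?subr_ge0.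
- by move=> v; rewrite mulr_ge0 ?subr_ge0 ?y0 ?x_load.
Qed.

Lemma weak_duality x : dual_feasible E w y lam -> primal_feasible E b x ->
  dual_obj E b y lam <= primal_obj E w x.
Proof.
move=> yl_feas x_feas; rewrite -subr_ge0 duality_gap.
have [g1 g2 g3] := duality_gap_terms_ge0 yl_feas x_feas.
by rewrite !addr_ge0 ?sumr_ge0.
Qed.

Lemma vertex_slackness x : dual_feasible E w y lam -> primal_feasible E b x ->
    primal_obj E w x = dual_obj E b y lam ->
  forall v, y v * ((b v)%:R - load x v) = 0.
Proof.
move=> yl_feas x_feas /eqP; rewrite -subr_eq0 duality_gap => /eqP gap0.
have [g1 g2 g3] := duality_gap_terms_ge0 yl_feas x_feas.
have s1 : 0 <= \sum_(e in E) x e * edge_slack e by exact: sumr_ge0.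
have s2 : 0 <= \sum_(e in E) lam e * (1 - x e) by exact: sumr_ge0.
have s3 : 0 <= \sum_v y v * ((b v)%:R - load x v) by exact: sumr_ge0.
have /psumr_eq0P s3_0 : \sum_v y v * ((b v)%:R - load x v) = 0 by lra.
by move=> v; apply: s3_0.
Qed.

(* Dual LP' in the form [max -(c . z)] subject to [0 <= s_k(z)], where
   [z = (y, lam)] and each constraint [s_k] is affine with gradient
   [dual_row k].  Constraints attached to non-edges get constant slack [1], so
   they are never active. *)
Definition dual_slack (k : V + {set V} + {set V}) : R :=
  match k with
  | inl (inl v) => y v
  | inl (inr e) => if e \in E then lam e else 1
  | inr e => if e \in E then edge_slack e else 1
  end.

Definition dual_row (k : V + {set V} + {set V}) (z : V + {set V}) : R :=
  match k, z with
  | inl (inl u), inl v => (u == v)%:R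
  | inl (inr e), inr f => (e == f)%:R
  | inr e, inl v => (v \in e)%:R
  | inr e, inr f => (e == f)%:R
  | _, _ => 0
  end.

Definition dual_cost (z : V + {set V}) : R :=
  match z with inl v => (b v)%:R | inr e => (e \in E)%:R end.

Lemma dual_slack_ge0 k : dual_feasible E w y lam -> 0 <= dual_slack k.
Proof.
move=> yl_feas; have [y0 [lam0 _]] := yl_feas.
case: k => [[v|e]|e] //=; case: ifP => // eE; [exact: lam0 | exact: edge_slack_ge0].
Qed.

Lemma dot_dual_row_vertex v d : dot (dual_row (inl (inl v))) d = d (inl v).
Proof.
by rewrite /dot big_sumType /= sum_eq_natl big1 ?addr0 // => e; rewrite mul0r.
Qed.

Lemma dot_dual_row_lam e d : dot (dual_row (inl (inr e))) d = d (inr e).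
Proof.
by rewrite /dot big_sumType /= sum_eq_natl big1 ?add0r // => v; rewrite mul0r.
Qed.

Lemma dot_dual_row_edge e d :
  dot (dual_row (inr e)) d = \sum_(v in e) d (inl v) + d (inr e).
Proof. by rewrite /dot big_sumType /= sum_mem_natl sum_eq_natl. Qed.

Lemma dot_dual_cost d :
  dot dual_cost d = \sum_v (b v)%:R * d (inl v) + \sum_(e in E) d (inr e).
Proof. by rewrite /dot big_sumType /= sum_mem_natl. Qed.

Lemma dual_obj_step t d :
  dual_obj E b (fun v => y v + t * d (inl v)) (fun e => lam e + t * d (inr e)) =
  dual_obj E b y lam - t * dot dual_cost d.
Proof.
rewrite /dual_obj dot_dual_cost; under eq_bigr do rewrite mulrDr mulrCA.
by rewrite !big_split /= -!mulr_sumr; ring.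
Qed.

Lemma dual_feasible_step t d :
    (forall k, 0 <= dual_slack k + t * dot (dual_row k) d) ->
  dual_feasible E w (fun v => y v + t * d (inl v)) (fun e => lam e + t * d (inr e)).
Proof.
move=> step; split; [|split].
- by move=> v; have := step (inl (inl v)); rewrite dot_dual_row_vertex.
- by move=> e eE; have := step (inl (inr e)); rewrite /= eE dot_dual_row_lam.
move=> i j eE; have := step (inr [set i; j]).
by rewrite /= eE dot_dual_row_edge /edge_slack !sum_edge //; lra.
Qed.

Lemma dual_optimal_no_improving_direction d : dual_optimal E b w y lam ->
    (forall k, dual_slack k = 0 -> 0 <= dot (dual_row k) d) ->
  0 <= dot dual_cost d.
Proof.
move=> [yl_feas yl_opt] d_active; rewrite leNgt; apply/negP => cost_lt0.
have [t t_gt0 step] := exists_feasible_step (dual_slack_ge0 ^~ yl_feas) d_active.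
have := yl_opt _ _ (dual_feasible_step step); rewrite dual_obj_step.
have : 0 < t * - dot dual_cost d by rewrite mulr_gt0 ?oppr_gt0.
lra.
Qed.

Lemma sum_dual_row_vertex (u : V + {set V} + {set V} -> R) v :
  \sum_k u k * dual_row k (inl v) =
  u (inl (inl v)) + \sum_(e : {set V}) (v \in e)%:R * u (inr e).
Proof.
rewrite !big_sumType /= [X in _ + X + _]big1 ?addr0; last by move=> e _; rewrite mulr0.
congr (_ + _); last by apply: eq_bigr => e _; rewrite mulrC.
by under eq_bigr do rewrite mulrC eq_sym; rewrite sum_eq_natl.
Qed.

Lemma sum_dual_row_edge (u : V + {set V} + {set V} -> R) e :
  \sum_k u k * dual_row k (inr e) = u (inl (inr e)) + u (inr e).
Proof.
rewrite !big_sumType /= big1 ?add0r; last by move=> v _; rewrite mulr0.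
by congr (_ + _); under eq_bigr do rewrite mulrC eq_sym; rewrite sum_eq_natl.
Qed.

Lemma primal_of_dual_multipliers (u : V + {set V} + {set V} -> R) :
    dual_feasible E w y lam -> (forall k, 0 <= u k) ->
    (forall k, dual_slack k != 0 -> u k = 0) ->
    (forall z, dual_cost z = \sum_k u k * dual_row k z) ->
  primal_feasible E b (fun e => u (inr e)) /\
  primal_obj E w (fun e => u (inr e)) = dual_obj E b y lam.
Proof.
move=> yl_feas u0 u_inactive cost_comb; set x := fun e => u (inr e).
have u_slack k : u k * dual_slack k = 0.
  by have [->|/u_inactive->] := eqVneq (dual_slack k) 0; rewrite ?mulr0 ?mul0r.
have x_edge e : e \in E -> 1 - x e = u (inl (inr e)).
  move=> eE; have := cost_comb (inr e).
  by rewrite /= eE sum_dual_row_edge mulr1n => ->; rewrite /x; ring.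
have x_load v : (b v)%:R - load x v = u (inl (inl v)).
  have := cost_comb (inl v); rewrite /= sum_dual_row_vertex => ->.
  suff -> : load x v = \sum_(e : {set V}) (v \in e)%:R * u (inr e) by ring.
  rewrite /load big_mkcondr big_mkcond /=; apply: eq_bigr => e _.
  case eE: (e \in E); case: (v \in e); rewrite /= ?mul1r ?mul0r //.
  by have := u_slack (inr e); rewrite /= eE mulr1.
split.
  split=> [e eE|v]; last by move: (x_load v) (u0 (inl (inl v))); rewrite /load; lra.
  have := x_edge e eE; have := u0 (inl (inr e)); have := u0 (inr e).
  by rewrite /x => *; apply/andP; split; lra.
apply/eqP; rewrite -subr_eq0 duality_gap !big1 ?addr0 // => [v _|e eE|e eE].
- by rewrite x_load mulrC; have := u_slack (inl (inl v)).
- by rewrite x_edge // mulrC; have := u_slack (inl (inr e)); rewrite /= eE.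
- by have := u_slack (inr e); rewrite /= eE.
Qed.

Lemma dual_optimal_primal_attained : dual_optimal E b w y lam ->
  exists2 x, primal_feasible E b x & primal_obj E w x = dual_obj E b y lam.
Proof.
move=> yl_opt; have yl_feas := yl_opt.1.
have [[u [u0 u_inactive cost_comb]]|[d [d_active cost_lt0]]] :=
  farkas (fun k => dual_slack k == 0) dual_row dual_cost.
  have [x_feas x_obj] := primal_of_dual_multipliers yl_feas u0 u_inactive cost_comb.
  by exists (fun e => u (inr e)).
suff : 0 <= dot dual_cost d by rewrite leNgt cost_lt0.
by apply: dual_optimal_no_improving_direction => // k /eqP /d_active.
Qed.

End Duality.

Section BMatchingLP.
Variables (R : realType) (V : finType) (E : {set {set V}}) (b : V -> nat).
Variable w : {set V} -> R.

Definition indicator (H : {set {set V}}) (e : {set V}) : R := (e \in H)%:R.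

Lemma load_indicator (H : {set {set V}}) v :
  H \subset E -> load E (indicator H) v = (deg H v)%:R.
Proof.
move=> HE; rewrite /load /indicator /deg /incident -sumr_const.
rewrite big_mkcond [RHS]big_mkcond /=; apply: eq_bigr => e _.
rewrite !inE; case eH: (e \in H); last by case: ifP.
by rewrite (subsetP HE) // andbC.
Qed.

Lemma primal_obj_indicator (H : {set {set V}}) :
  H \subset E -> primal_obj E w (indicator H) = weight w H.
Proof.
move=> HE; rewrite /primal_obj /weight /indicator big_mkcond [RHS]big_mkcond /=.
apply: eq_bigr => e _; case eH: (e \in H); last by rewrite mulr0; case: ifP.
by rewrite (subsetP HE) // mulr1.
Qed.

Lemma bmatching_primal_feasible (H : {set {set V}}) :
  is_bmatching E b H -> primal_feasible E b (indicator H).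
Proof.
move=> [HE H_deg]; split=> [e _|v].
  by rewrite /indicator; case: (e \in H); rewrite /= ?lexx ?ler01.
by rewrite -[X in X <= _]/(load E _ v) load_indicator // ler_nat.
Qed.

Lemma integral_primal_bmatching x : primal_feasible E b x ->
    (forall e, e \in E -> x e = 0 \/ x e = 1) ->
  exists2 H, is_bmatching E b H & weight w H = primal_obj E w x.
Proof.
move=> x_feas x01; pose H := [set e in E | x e == 1].
have HE : H \subset E by apply/subsetP => e; rewrite inE => /andP[].
have x_ind e : e \in E -> x e = indicator H e.
  rewrite /indicator inE => eE; rewrite eE /=.
  by case: (x01 e eE) => ->; rewrite ?eqxx // eq_sym oner_eq0.
have load_x v : load E x v = load E (indicator H) v.
  by apply: eq_bigr => e /andP[eE _]; exact: x_ind.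
exists H.
  split=> // v; rewrite -(ler_nat R) -load_indicator // -load_x; exact: x_feas.2.
by rewrite -primal_obj_indicator //; apply: eq_bigr => e eE; rewrite x_ind.
Qed.

Lemma load_add_scale (x x' : {set V} -> R) t v :
  load E (fun e => x e + t * x' e) v = load E x v + t * load E x' v.
Proof. by rewrite /load big_split mulr_sumr. Qed.

Lemma primal_obj_add_scale (x x' : {set V} -> R) t :
  primal_obj E w (fun e => x e + t * x' e) = primal_obj E w x + t * primal_obj E w x'.
Proof.
rewrite /primal_obj mulr_sumr -big_split.
by apply: eq_bigr => e _; rewrite mulrDr mulrCA.
Qed.

Lemma min_bmatching_dual_value H y lam : simple_graph E ->
    min_weight_bmatching E b w H -> no_fractional_solution E b w ->
    dual_optimal E b w y lam ->
  primal_obj E w (indicator H) = dual_obj E b y lam.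
Proof.
move=> sgE [H_bm H_min] no_frac yl_opt; have yl_feas := yl_opt.1.
have [x x_feas x_obj] := dual_optimal_primal_attained sgE yl_opt.
have x_opt : primal_optimal E b w x.
  by split=> // x' /(weak_duality sgE yl_feas); rewrite x_obj.
have [H0 H0_bm H0_weight] := integral_primal_bmatching x_feas (no_frac x x_opt).
have := weak_duality sgE yl_feas (bmatching_primal_feasible H_bm).
move=> dual_le; apply/eqP; rewrite eq_le dual_le andbT.
by rewrite primal_obj_indicator ?H_bm.1 // -x_obj -H0_weight H_min.
Qed.

Lemma optimal_bmatching_unsat_dual0 H y lam v : simple_graph E ->
    dual_feasible E w y lam -> is_bmatching E b H ->
    primal_obj E w (indicator H) = dual_obj E b y lam ->
  v \in unsat b H -> y v = 0.
Proof.
move=> sgE yl_feas H_bm H_val; rewrite inE => v_unsat.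
have /eqP := vertex_slackness sgE yl_feas (bmatching_primal_feasible H_bm) H_val v.
rewrite mulf_eq0 load_indicator ?H_bm.1 // subr_eq0 eqr_nat.
case/orP=> [/eqP // | /eqP b_deg].
by rewrite b_deg ltnn in v_unsat.
Qed.

End BMatchingLP.

Arguments indicator {R V} H e.

Lemma sum_alternating_telescope (R : pzRingType) (s f : nat -> R) k :
    (0 < k)%N -> (forall r, s r.+1 = - s r) ->
  \sum_(r < k) s r * (f r + f r.+1) = s 0%N * f 0%N + s k.-1 * f k.
Proof.
case: k => // k _ sS; elim: k => [|k IH]; first by rewrite big_ord1 mulrDr.
by rewrite big_ord_recr /= IH sS mulrDr mulNr addrA addrK mulNr.
Qed.

Section AlternatingPath.
Variables (R : realType) (V : finType) (E : {set {set V}}) (i0 : V) (p : seq V).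
Hypothesis sgE : simple_graph E.
Hypothesis p_nil : p != [::].
Hypothesis p_edges : forall r, (r < size p)%N -> wedge i0 p r \in E.

Definition path_flow (s : nat -> R) (e : {set V}) : R :=
  \sum_(r < size p) (wedge i0 p r == e)%:R * s r.

Lemma sum_path_flow (g : {set V} -> R) s :
  \sum_(e in E) g e * path_flow s e = \sum_(r < size p) s r * g (wedge i0 p r).
Proof.
under eq_bigr do rewrite /path_flow mulr_sumr.
rewrite exchange_big /=; apply: eq_bigr => r _.
rewrite (bigD1 (wedge i0 p r)) ?p_edges //= eqxx mul1r mulrC big1 ?addr0 //.
by move=> e /andP[_ /negbTE]; rewrite eq_sym => ->; rewrite mul0r mulr0.
Qed.

Lemma wv_last : wv i0 p (size p) = last i0 p.
Proof. exact: nth_last. Qed.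

Lemma mem_wedge_nat r i : (r < size p)%N ->
  (i \in wedge i0 p r)%:R = (i == wv i0 p r)%:R + (i == wv i0 p r.+1)%:R :> R.
Proof.
move=> /p_edges /(edge_neq sgE) ends_neq; rewrite in_set2.
by case: eqP => [->|_] /=; rewrite ?(negbTE ends_neq) ?addr0 ?add0r.
Qed.

Lemma size_path_gt0 : (0 < size p)%N.
Proof. by case: p p_nil. Qed.

Lemma load_path_flow s i : (forall r, s r.+1 = - s r) ->
  load E (path_flow s) i =
  s 0%N * (i == i0)%:R + s (size p).-1 * (i == last i0 p)%:R.
Proof.
move=> sS; rewrite /load big_mkcondr /=.
under eq_bigr do rewrite -mulrb -mulr_natl.
rewrite sum_path_flow; under eq_bigr => r _ do rewrite mem_wedge_nat //.
rewrite (sum_alternating_telescope (fun t => (i == wv i0 p t)%:R)) //.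
  by rewrite wv_last.
exact: size_path_gt0.
Qed.

Definition path_tight (w : {set V} -> R) (y : V -> R) : Prop :=
  forall r, (r < size p)%N -> w (wedge i0 p r) + y (wv i0 p r) + y (wv i0 p r.+1) = 0.

Lemma primal_obj_path_flow (w : {set V} -> R) (y : V -> R) s :
    (forall r, s r.+1 = - s r) -> path_tight w y -> y i0 = 0 -> y (last i0 p) = 0 ->
  primal_obj E w (path_flow s) = 0.
Proof.
move=> sS tight y_i0 y_last; rewrite /primal_obj sum_path_flow.
have -> : \sum_(r < size p) s r * w (wedge i0 p r) =
    - \sum_(r < size p) s r * (y (wv i0 p r) + y (wv i0 p r.+1)).
  rewrite -sumrN; apply: eq_bigr => r _; rewrite -mulrN; congr (_ * _).
  by have := tight r (ltn_ord r); lra.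
rewrite (sum_alternating_telescope (fun t => y (wv i0 p t))) ?size_path_gt0 //.
by rewrite wv_last y_last y_i0 !mulr0 addr0 oppr0.
Qed.

Variables (H : {set {set V}}) (c : bool).
Hypothesis p_alt : forall r, (r < size p)%N -> (wedge i0 p r \in H) = (odd r == c).

Definition alt_sign (r : nat) : R := if odd r == c then -1 else 1.

Lemma alt_signS r : alt_sign r.+1 = - alt_sign r.
Proof. by rewrite /alt_sign /=; case: (odd r); case: c; rewrite /= ?opprK. Qed.

Definition path_mult (e : {set V}) : R := path_flow (fun=> 1) e.

Lemma path_mult_ge0 e : 0 <= path_mult e.
Proof. by apply: sumr_ge0 => r _; rewrite mulr1 ler0n. Qed.

Lemma path_mult_le_size e : path_mult e <= (size p)%:R.
Proof.
have -> : (size p)%:R = \sum_(r < size p) (1 : R) by rewrite sumr_const card_ord.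
apply: ler_sum => r _.
by rewrite mulr1; case: eqP.
Qed.

Lemma path_mult_first_ge1 : 1 <= path_mult (wedge i0 p 0).
Proof.
rewrite /path_mult /path_flow (bigD1 (Ordinal size_path_gt0)) //= eqxx mulr1 lerDl.
by apply: sumr_ge0 => r _; rewrite mulr1 ler0n.
Qed.

Lemma path_flow_alt_sign e :
  path_flow alt_sign e = (if e \in H then -1 else 1) * path_mult e.
Proof.
rewrite /path_mult /path_flow mulr_sumr; apply: eq_bigr => r _.
by case: eqP => [<-|_]; rewrite ?mul0r ?mulr0 // /alt_sign p_alt // mul1r !mulr1.
Qed.

(* Step size [1 / (|p| + 1)]: an edge occurs at most [|p|] times on [p]. *)
Definition path_eps : R := ((size p).+1)%:R^-1.

Lemma path_eps_gt0 : 0 < path_eps.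
Proof. by rewrite invr_gt0 ltr0n. Qed.

Lemma path_eps_mult_lt1 e : path_eps * path_mult e < 1.
Proof.
rewrite mulrC ltr_pdivrMr ?ltr0n // mul1r.
by apply: le_lt_trans (path_mult_le_size e) _; rewrite ltr_nat.
Qed.

Definition perturbation (e : {set V}) : R :=
  indicator H e + path_eps * path_flow alt_sign e.

Lemma perturbationE e : perturbation e =
  if e \in H then 1 - path_eps * path_mult e else path_eps * path_mult e.
Proof.
rewrite /perturbation /indicator path_flow_alt_sign.
by case: (e \in H); rewrite /= ?mulN1r ?mul1r ?mulrN ?add0r.
Qed.

Lemma perturbation_fractional : 0 < perturbation (wedge i0 p 0) < 1.
Proof.
have lt1 := path_eps_mult_lt1 (wedge i0 p 0).
have gt0 : 0 < path_eps * path_mult (wedge i0 p 0).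
  by rewrite mulr_gt0 ?path_eps_gt0 // (lt_le_trans ltr01 path_mult_first_ge1).
by rewrite perturbationE; case: ifP => _; apply/andP; split; lra.
Qed.

Lemma perturbation_feasible b : is_bmatching E b H ->
  i0 \in unsat b H -> last i0 p \in unsat b H -> primal_feasible E b perturbation.
Proof.
move=> [HE H_deg] i0_unsat last_unsat; split=> [e _|v].
  have lt1 := path_eps_mult_lt1 e.
  have ge0 := mulr_ge0 (ltW path_eps_gt0) (path_mult_ge0 e).
  by rewrite perturbationE; case: ifP => _; apply/andP; split; lra.
rewrite -[X in X <= _]/(load E perturbation v) load_add_scale load_indicator //.
rewrite load_path_flow; last exact: alt_signS.
pose at_end := (v == i0) || (v == last i0 p).
have deg_end : (deg H v + at_end <= b v)%N.
  rewrite /at_end; case: (eqVneq v i0) => [->|_] /=.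
    by rewrite addn1; move: i0_unsat; rewrite inE.
  case: (eqVneq v (last i0 p)) => [->|_] /=; last by rewrite addn0.
  by rewrite addn1; move: last_unsat; rewrite inE.
have sign_le r (a : bool) : alt_sign r * a%:R <= a%:R.
  by rewrite /alt_sign; case: ifP; case: a; rewrite /= ?mulr1 ?mulr0 //; lra.
have eps2 : path_eps * 2 <= 1.
  by rewrite mulrC ler_pdivrMr ?ltr0n // mul1r ler_nat ltnS size_path_gt0.
have ends_le : path_eps * ((v == i0)%:R + (v == last i0 p)%:R) <= at_end%:R.
  have := path_eps_gt0; rewrite /at_end.
  by case: (v == i0); case: (v == last i0 p); rewrite /= ?mulr0 //; lra.
apply: (@le_trans _ _ ((deg H v)%:R + at_end%:R)); last by rewrite -natrD ler_nat.
rewrite lerD2l; apply: le_trans ends_le; rewrite ler_wpM2l ?(ltW path_eps_gt0) //.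
exact: lerD (sign_le _ _) (sign_le _ _).
Qed.

Lemma primal_obj_perturbation (w : {set V} -> R) (y : V -> R) :
    path_tight w y -> y i0 = 0 -> y (last i0 p) = 0 ->
  primal_obj E w perturbation = primal_obj E w (indicator H).
Proof.
move=> tight y_i0 y_last.
by rewrite primal_obj_add_scale (primal_obj_path_flow alt_signS tight) // mulr0 addr0.
Qed.

End AlternatingPath.

Theorem lemma6 (R : realType) (V : finType) (E : {set {set V}}) (b : V -> nat)
    (w : {set V} -> R) (H : {set {set V}}) (y : V -> R) (lam : {set V} -> R)
    (i0 : V) (p : seq V) :
  simple_graph E ->
  (forall i, 0 < b i <= deg E i)%N ->
  (forall e, e \in E -> w e <= 0) ->
  min_weight_bmatching E b w H ->
  no_fractional_solution E b w ->
  dual_optimal E b w y lam ->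
  alternating_path E H i0 p ->
  i0 \in unsat b H -> last i0 p \in unsat b H ->
  exists2 r, (r < size p)%N &
    0 < `|w (wedge i0 p r) + y (wv i0 p r) + y (wv i0 p r.+1)|.
Proof.
move=> sgE _ _ H_min no_frac yl_opt [p_nil p_edges [c p_alt] _] i0_unsat last_unsat.
have [H_bm yl_feas] := (H_min.1, yl_opt.1).
have H_val := min_bmatching_dual_value sgE H_min no_frac yl_opt.
have y_unsat v := optimal_bmatching_unsat_dual0 (v := v) sgE yl_feas H_bm H_val.
pose slack r := w (wedge i0 p r) + y (wv i0 p r) + y (wv i0 p r.+1).
case: (boolP [exists r : 'I_(size p), 0 < `|slack r|]) => [/existsP[r]|/existsPn].
  by exists r.
move=> no_slack; have tight : path_tight i0 p w y.
  by move=> r r_lt; have := no_slack (Ordinal r_lt); rewrite normr_gt0 negbK => /eqP.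
have x_feas := perturbation_feasible R sgE p_nil p_edges p_alt H_bm i0_unsat last_unsat.
have x_obj := primal_obj_perturbation p_nil p_edges H c tight
  (y_unsat _ i0_unsat) (y_unsat _ last_unsat).
have x_opt : primal_optimal E b w (perturbation R i0 p H c).
  by split=> // x' /(weak_duality sgE yl_feas); rewrite x_obj H_val.
have := perturbation_fractional R p_nil p_alt.
have first_edge := p_edges 0%N (size_path_gt0 p_nil).
by case: (no_frac _ x_opt _ first_edge) => ->; rewrite ltxx ?andbF.
Qed.
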